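(* Let $E^{II}_m(q;x,y)=\sum_{T\in\mathcal{T}^{II}_m}x^{l(T)}y^{u(T)}q^{\operatorname{inv}(T)}$ for $m\ge1$ and set $E^{II}_0(q;x,y)=x$. Then for all $n\ge1$, \[ E^{II}_{n+1}(q;x,y)=y\,E^{II}_n(q;x,y)+\sum_{k=0}^{n-2}q^{2(n-k-1)}{n-1\brack k}_q\,E^{II}_{k+1}(q;x,y)\,E^{II}_{n-k-1}(q;x,y). \]
   Context: An increasing binary tree on $[m]$ is a rooted tree on $\{1,\dots,m\}$ with labels increasing along paths from the root, each vertex having at most one (distinguished) left child and at most one right child. $\mathcal{T}^{II}_m$ is the set of André II trees on $[m]$: increasing binary trees in which, for every vertex with at least one child, the minimum label of the left subtree is greater than the minimum label of the right subtree (minimum of the empty tree $=+\infty$). $l(T)$ is the number of leaves, $u(T)$ the number of vertices with exactly one child. An inversion of $T$ is a pair $(i,j)$ of vertices with $i>j$ such that either (1) $j$ belongs to the right subtree of some vertex $v$ on the path from the root to $i$ whose left child is on that path; or (2) $j$ is on the path from the root to $i$ and the left child of $j$ is on that path; $\operatorname{inv}(T)$ counts inversions. ${n\brack k}_q=\frac{(q;q)_n}{(q;q)_k(q;q)_{n-k}}$, $(q;q)_n=\prod_{i=1}^n(1-q^i)$. *)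

From HB Require Import structures.
From mathcomp Require Import all_boot all_order all_algebra.
Set Implicit Arguments. Unset Strict Implicit. Unset Printing Implicit Defensive.
Import Order.TTheory GRing.Theory Num.Theory.

(* Binary trees with nat labels; Leaf = empty tree, Node l v r = vertex v
   with left subtree l and right subtree r. *)
Inductive btree := Leaf | Node of btree & nat & btree.

Fixpoint btree_eqb (s t : btree) : bool :=
  match s, t with
  | Leaf, Leaf => true
  | Node l v r, Node l' v' r' => [&& btree_eqb l l', v == v' & btree_eqb r r']
  | _, _ => false
  end.

Lemma btree_eqbP : Equality.axiom btree_eqb.
Proof.
elim=> [|l IHl v r IHr] [|l' v' r'] /=; try by constructor.
case: (IHl l') => [->|nl] /=; last by right; congruence.
case: (v =P v') => [->|nv] /=; last by right; congruence.
by case: (IHr r') => [->|nr]; [left | right; congruence].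
Qed.

HB.instance Definition _ := hasDecEq.Build btree btree_eqbP.

Fixpoint labels (t : btree) : seq nat :=
  match t with Leaf => [::] | Node l v r => labels l ++ v :: labels r end.

Fixpoint subtrees (t : btree) : seq btree :=
  match t with Leaf => [::] | Node l v r => t :: subtrees l ++ subtrees r end.

Definition root_label (t : btree) : option nat :=
  if t is Node _ v _ then Some v else None.

Fixpoint increasing (t : btree) : bool :=
  match t with
  | Leaf => true
  | Node l v r =>
      [&& (if root_label l is Some a then v < a else true),
          (if root_label r is Some b then v < b else true),
          increasing l & increasing r]
  end.

(* minimum label of a tree; None stands for +infinity (empty tree) *)
Definition min_label (t : btree) : option nat :=
  if labels t is a :: s then Some (foldr minn a s) else None.

Definition gt_ext (a b : option nat) : bool :=
  match a, b with
  | None, Some _ => true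
  | Some a, Some b => b < a
  | _, _ => false
  end.

Fixpoint andre_cond (t : btree) : bool :=
  match t with
  | Leaf => true
  | Node l v r =>
      [&& ((l == Leaf) && (r == Leaf)) || gt_ext (min_label l) (min_label r),
          andre_cond l & andre_cond r]
  end.

Definition andreII (m : nat) (t : btree) : bool :=
  [&& perm_eq (labels t) (iota 1 m), increasing t & andre_cond t].

Fixpoint leaves (t : btree) : nat :=
  match t with
  | Leaf => 0
  | Node Leaf _ Leaf => 1
  | Node l _ r => leaves l + leaves r
  end.

Fixpoint unary (t : btree) : nat :=
  match t with
  | Leaf => 0
  | Node l _ r =>
      ((l == Leaf) (+) (r == Leaf)) + unary l + unary r
  end.

Definition is_inv (t : btree) (i j : nat) : bool :=
  (j < i) &&
  has (fun s => if s is Node l v r then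
                  (i \in labels l) && ((j \in labels r) || (j == v))
                else false) (subtrees t).

Definition inv_tree (t : btree) : nat :=
  size [seq p <- [seq (i, j) | i <- labels t, j <- labels t] | is_inv t p.1 p.2].

Fixpoint all_trees (L : seq nat) (h : nat) : seq btree :=
  match h with
  | 0 => [:: Leaf]
  | h'.+1 => Leaf :: flatten [seq [seq Node l v r | v <- L, r <- all_trees L h']
                                 | l <- all_trees L h']
  end.

Local Open Scope ring_scope.

(* E^{II}_m(q;x,y); a tree on [m] has m vertices hence height <= m,
   so all André II trees on [m] appear in all_trees (iota 1 m) m. *)
Definition EII (R : comRingType) (q x y : R) (m : nat) : R :=
  if m is 0 then x else
  \sum_(t <- undup (all_trees (iota 1 m) m) | andreII m t)
     x ^+ leaves t * y ^+ unary t * q ^+ inv_tree t.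

Definition qpoch (R : comRingType) (q : R) (n : nat) : R :=
  \prod_(1 <= i < n.+1) (1 - q ^+ i).

Definition qbinom (R : fieldType) (q : R) (n k : nat) : R :=
  qpoch q n / (qpoch q k * qpoch q (n - k)).

(* In an André II tree on a sorted label list v :: a :: s the root carries the least label v,
   and the André condition at the root only forces the second least label a into the right
   subtree.  Hence these trees are exactly the Node l v r with l an André tree on a
   subsequence A of s and r one on a :: B, where B is the complementary subsequence.  Leaves,
   unary vertices and inversions add up over the two subtrees, except that the root is unary
   iff A is empty and that the pairs straddling the root contribute cross(A, v :: a :: B)
   inversions.  All statistics are invariant under order-preserving relabelling, so for
   v = 1 and a = 2 the split (A, B) contributes q^(2|A| + cross(A, B)) E_|A| E_(|B|+1);
   summing q^cross(A, B) over the splits with |B| = k gives the Gaussian binomial, since both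
   satisfy the q-Pascal recurrence. *)

From HB Require Import structures.
From mathcomp Require Import all_boot all_order all_algebra.
From mathcomp Require Import zify ring.
Import GRing.Theory.
Set Implicit Arguments. Unset Strict Implicit. Unset Printing Implicit Defensive.

Fixpoint splits {T : Type} (s : seq T) : seq (seq T * seq T) :=
  if s is x :: s' then
    [seq (x :: p.1, p.2) | p <- splits s'] ++ [seq (p.1, x :: p.2) | p <- splits s']
  else [:: ([::], [::])].

Lemma splits_map (T T' : Type) (f : T -> T') s :
  splits (map f s) = [seq (map f p.1, map f p.2) | p <- splits s].
Proof.
elim: s => //= x s ->; rewrite map_cat -!map_comp.
by congr (_ ++ _); apply: eq_map => -[].
Qed.

Section Splits.

Variable T : eqType.
Implicit Types (s : seq T) (p : seq T * seq T).

Lemma perm_splits s p : p \in splits s -> perm_eq (p.1 ++ p.2) s.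
Proof.
elim: s p => [|x s IH] [A B] /=; first by rewrite inE => /eqP [-> ->].
rewrite mem_cat => /orP [] /mapP [[A' B'] /IH /= pAB [-> ->]] /=.
  by rewrite perm_cons.
by rewrite -cat1s perm_catCA /= perm_cons.
Qed.

Lemma size_splits s p : p \in splits s -> size p.1 + size p.2 = size s.
Proof. by move/perm_splits/perm_size; rewrite size_cat. Qed.

Lemma subseq_splits s p : p \in splits s -> subseq p.1 s /\ subseq p.2 s.
Proof.
elim: s p => [|x s IH] [A B] /=; first by rewrite inE => /eqP [-> ->].
rewrite mem_cat => /orP [] /mapP [[A' B'] /IH /= [sA sB] [-> ->]] /=.
  by split; [rewrite /= eqxx | exact: subseq_trans sB (subseq_cons _ _)].
by split; [exact: subseq_trans sA (subseq_cons _ _) | rewrite /= eqxx].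
Qed.

Lemma all_splits (a : pred T) s p : all a s -> p \in splits s -> all a p.1 /\ all a p.2.
Proof. by move=> a_s /perm_splits/(perm_all a); rewrite all_cat a_s => /andP. Qed.

Lemma filter_mem_splits (a : pred T) s :
  ([seq z <- s | a z], [seq z <- s | ~~ a z]) \in splits s.
Proof.
elim: s => //= x s IH; rewrite mem_cat.
by case: (a x); apply/orP; [left | right]; apply/mapP; exists (filter a s, filter (predC a) s).
Qed.

Lemma filter_splits_nil s : [seq p <- splits s | p.1 == [::]] = [:: ([::], s)].
Proof. by elim: s => //= x s IH; rewrite filter_cat !filter_map filter_pred0 //= IH. Qed.

Lemma uniq_splits s : uniq s -> uniq (splits s).
Proof.
elim: s => //= x s IH /andP [xs us].
have injl : injective (fun p => (x :: p.1, p.2) : seq T * seq T).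
  by move=> [A B] [A' B'] [-> ->].
have injr : injective (fun p => (p.1, x :: p.2) : seq T * seq T).
  by move=> [A B] [A' B'] [-> ->].
rewrite cat_uniq !map_inj_uniq ?IH //= andbT.
apply/hasPn => _ /mapP [p _ ->]; apply/mapP => -[p' /subseq_splits [_ sB] [_ Bx]].
by move: xs; rewrite (mem_subseq sB) // -Bx mem_head.
Qed.

Lemma sorted_splits (leT : rel T) a s p : transitive leT ->
  sorted leT (a :: s) -> p \in splits s -> sorted leT p.1 /\ sorted leT (a :: p.2).
Proof.
move=> leT_tr as_sorted /subseq_splits [sA sB]; split.
  by apply: (subseq_sorted leT_tr sA); apply: path_sorted as_sorted.
by apply: (subseq_sorted leT_tr _ as_sorted); rewrite /= eqxx.
Qed.

End Splits.

Lemma perm_cat_filter (T : eqType) (L R s : seq T) :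
  perm_eq (L ++ R) s -> uniq s ->
  perm_eq L [seq z <- s | z \in L] /\ perm_eq R [seq z <- s | z \notin L].
Proof.
move=> pLR us; have := us; rewrite -(perm_uniq pLR) cat_uniq => /and3P [uL dLR uR].
have inLR z : (z \in s) = (z \in L) || (z \in R) by rewrite -(perm_mem pLR) mem_cat.
split; apply: uniq_perm; rewrite ?filter_uniq // => z; rewrite mem_filter inLR.
  by case: (z \in L).
by case: (boolP (z \in R)) => zR; [rewrite (negbTE (hasPn dLR _ zR)) | rewrite orbF andNb].
Qed.

Lemma perm_min_head w v L s : perm_eq (w :: L) (v :: s) ->
  all (ltn w) L -> all (ltn v) s -> w = v.
Proof.
move=> p wL vs; apply/eqP; rewrite eqn_leq; apply/andP; split.
  have := mem_head v s; rewrite -(perm_mem p) inE.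
  by case/predU1P => [-> // | /(allP wL)/ltnW].
have := mem_head w L; rewrite (perm_mem p) inE.
by case/predU1P => [-> // | /(allP vs)/ltnW].
Qed.

Lemma flatten_map_uniq (S T : eqType) (F : S -> seq T) (ps : seq S) :
  uniq ps -> {in ps, forall p, uniq (F p)} ->
  (forall p p' t, p \in ps -> p' \in ps -> t \in F p -> t \in F p' -> p = p') ->
  uniq (flatten (map F ps)).
Proof.
move=> ups uF disj; have := @allpairs_uniq_dep S (fun _ => T) T (fun _ t => t) ps F ups uF.
rewrite (eq_map (fun p => map_id (F p))); apply.
move=> _ _ /allpairsPdep [p [t [pin tin ->]]] /allpairsPdep [p' [t' [p'in t'in ->]]] /= ett'.
by subst t'; rewrite (disj p p' t).
Qed.

Lemma big_seq_subset (R : Type) (idx : R) (op : Monoid.com_law idx) (I : eqType)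
    (M A : seq I) (F : I -> R) :
  uniq M -> uniq A -> {subset A <= M} ->
  \big[op/idx]_(i <- M | i \in A) F i = \big[op/idx]_(i <- A) F i.
Proof.
move=> uM uA AM; rewrite -big_filter; apply: perm_big.
apply: uniq_perm; rewrite ?filter_uniq // => i.
by rewrite mem_filter andb_idr // => /AM.
Qed.

Lemma big_partition_ord (R : Type) (idx : R) (op : Monoid.com_law idx) (T : eqType)
    (s : seq T) (P : pred T) (g : T -> nat) (N : nat) (F : T -> R) :
  {in s, forall t, P t = (g t < N)} ->
  \big[op/idx]_(t <- s | P t) F t =
  \big[op/idx]_(k < N) \big[op/idx]_(t <- s | g t == k) F t.
Proof.
move=> Pg; rewrite (exchange_big_dep predT) //= big_mkcond; apply: eq_big_seq => t ts.
rewrite Pg //; case: ltnP => [lt_gN | le_Ng].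
  by rewrite (big_pred1 (Ordinal lt_gN)) // => k; rewrite /= eq_sym.
rewrite big_pred0 // => k; apply: negbTE.
by rewrite neq_ltn (leq_trans (ltn_ord k) le_Ng) orbT.
Qed.

Lemma labels_eq0 t : (labels t == [::]) = (t == Leaf).
Proof. by case: t => //= l v r; case: (labels l). Qed.

Lemma root_label_gtE t v : increasing t ->
  (if root_label t is Some a then v < a else true) = all (ltn v) (labels t).
Proof.
elim: t v => //= l IHl a r IHr v /and4P [la ra il ir].
rewrite (IHl a il) in la; rewrite (IHr a ir) in ra.
have gt_v (s : seq nat) : v < a -> all (ltn a) s -> all (ltn v) s.
  by move=> va; apply: sub_all => z; apply: ltn_trans.
by rewrite all_cat /=; case: ltnP => va; rewrite ?andbF // !gt_v.
Qed.

Lemma increasing_nodeE l v r : increasing (Node l v r) =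
  [&& all (ltn v) (labels l), all (ltn v) (labels r), increasing l & increasing r].
Proof.
rewrite /=; case il: (increasing l); case ir: (increasing r); rewrite ?andbF //.
by rewrite !root_label_gtE.
Qed.

Lemma foldr_minn_mem a s : foldr minn a s \in a :: s.
Proof.
elim: s => [|b s IH]; first exact: mem_head.
rewrite [foldr _ _ _]/= !inE.
case: (leqP b (foldr minn a s)) => _; first by rewrite eqxx orbT.
by move: IH; rewrite inE => /orP [] ->; rewrite ?orbT.
Qed.

Lemma foldr_minn_leq a s : {in a :: s, forall y, foldr minn a s <= y}.
Proof.
elim: s => [|b s IH] y; first by rewrite inE => /eqP ->.
rewrite /= geq_min !inE => /or3P [/eqP -> | /eqP -> | ys].
- by rewrite IH ?mem_head ?orbT.
- by rewrite leqnn.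
- by rewrite IH ?orbT // inE ys orbT.
Qed.

Lemma min_label_mem t z : min_label t = Some z -> z \in labels t.
Proof. by rewrite /min_label; case: (labels t) => // a s [<-]; apply: foldr_minn_mem. Qed.

Lemma min_labelE t z :
  z \in labels t -> {in labels t, forall y, z <= y} -> min_label t = Some z.
Proof.
rewrite /min_label; case: (labels t) => // a s zin zmin; congr Some.
by apply/eqP; rewrite eqn_leq foldr_minn_leq // zmin // foldr_minn_mem.
Qed.

Lemma gt_ext_min_label l r a s :
  sorted ltn (a :: s) -> perm_eq (labels l ++ labels r) (a :: s) ->
  gt_ext (min_label l) (min_label r) = (a \in labels r).
Proof.
move=> as_sorted plr; have uas := sorted_uniq ltn_trans ltnn as_sorted.
have := uas; rewrite -(perm_uniq plr) cat_uniq => /and3P [_ dlr _].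
have a_min z : z \in labels l ++ labels r -> z != a -> a < z.
  rewrite (perm_mem plr) inE => /predU1P [-> /eqP // | zs _].
  exact: (allP (order_path_min ltn_trans as_sorted)).
have min_a t : a \in labels t -> {subset labels t <= labels l ++ labels r} ->
    min_label t = Some a.
  move=> ta sub; apply: min_labelE => // y /sub yin.
  by case: (eqVneq y a) => [-> // | ya]; rewrite ltnW ?a_min.
case: (boolP (a \in labels r)) => ar.
  rewrite (min_a r ar) => [|z zr]; last by rewrite mem_cat zr orbT.
  case El: (min_label l) => [z|] //=; have zl := min_label_mem El.
  by rewrite a_min ?mem_cat ?zl //; apply: contraTneq zl => ->; apply: (hasPn dlr).
have al : a \in labels l.
  by move: (mem_head a s); rewrite -(perm_mem plr) mem_cat (negbTE ar) orbF.
rewrite (min_a l al) => [|z zl]; last by rewrite mem_cat zl.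
case Er: (min_label r) => [z|] //=; have zr := min_label_mem Er.
by rewrite ltnNge ltnW // a_min ?mem_cat ?zr ?orbT //; apply: contraNneq ar => <-.
Qed.

Definition andre_on (s : seq nat) (t : btree) : bool :=
  [&& perm_eq (labels t) s, increasing t & andre_cond t].

Lemma andre_on_nil t : andre_on [::] t = (t == Leaf).
Proof.
case: t => // l v r; apply/negbTE/negP => /and3P [/perm_size].
by rewrite size_cat /= addnS.
Qed.

Lemma andre_on1 v t : andre_on [:: v] t = (t == Node Leaf v Leaf).
Proof.
apply/idP/eqP => [|->]; last by rewrite /andre_on perm_refl.
case: t => [|l w r] /and3P [p _ _]; first by have := perm_size p.
have /eqP := perm_size p; rewrite size_cat /= addnS eqSS addn_eq0 !size_eq0 !labels_eq0.
case/andP => /eqP El /eqP Er; subst l r.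
by move/perm_mem/(_ w): p; rewrite !mem_seq1 eqxx => /esym/eqP ->.
Qed.

Lemma andre_on_node v a s l w r : sorted ltn [:: v, a & s] ->
  andre_on [:: v, a & s] (Node l w r) =
  (w == v) && has (fun p => andre_on p.1 l && andre_on (a :: p.2) r) (splits s).
Proof.
move=> vas; have as_sorted := path_sorted vas.
have v_min : all (ltn v) (a :: s) := order_path_min ltn_trans vas.
have uas := sorted_uniq ltn_trans ltnn as_sorted.
rewrite [andre_on _ (Node _ _ _)]/andre_on increasing_nodeE /=; apply/idP/idP.
  case/and3P=> + /and4P [wl wr il ir] /and3P [c cl cr].
  rewrite -cat1s perm_catCA /= => p.
  have wv : w = v by apply: perm_min_head p _ v_min; rewrite all_cat wl wr.
  subst w; rewrite perm_cons in p.
  have : a \in labels r.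
    rewrite -(gt_ext_min_label as_sorted p); case/orP: c => // /andP [/eqP El /eqP Er].
    by move: p; rewrite El Er => /perm_size.
  have := uas; rewrite -(perm_uniq p) cat_uniq => /and3P [_ /hasPn dlr _] ar.
  have [pl pr] := perm_cat_filter p uas.
  rewrite /= (negbTE (dlr a ar)) /= in pl pr; rewrite eqxx; apply/hasP.
  exists ([seq z <- s | z \in labels l], [seq z <- s | z \notin labels l]).
    exact: (filter_mem_splits (mem (labels l))).
  by rewrite /andre_on pl pr il ir cl cr.
case/andP => /eqP -> /hasP [[A B] pAB /andP [/and3P [pl il cl] /and3P [pr ir cr]]].
have plr : perm_eq (labels l ++ labels r) (a :: s).
  apply: perm_trans (perm_cat pl pr) _.
  by rewrite -cat1s perm_catCA /= perm_cons (perm_splits pAB).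
have := perm_all (ltn v) plr; rewrite all_cat v_min => /andP [-> ->].
rewrite il ir cl cr (gt_ext_min_label as_sorted plr) (perm_mem pr) mem_head orbT.
by rewrite andbT -cat1s perm_catCA /= perm_cons plr.
Qed.

(* Structural recursion needs fuel; any fuel of at least size s yields every André II tree
   on the sorted list s. *)
Fixpoint andre_trees (fuel : nat) (s : seq nat) : seq btree :=
  if fuel is fuel'.+1 then
    match s with
    | [::] => [:: Leaf]
    | [:: v] => [:: Node Leaf v Leaf]
    | v :: a :: s' =>
        flatten [seq [seq Node l v r | l <- andre_trees fuel' p.1,
                                       r <- andre_trees fuel' (a :: p.2)]
                | p <- splits s']
    end
  else [:: Leaf].

Lemma andre_trees_cons2 fuel v a s : andre_trees fuel.+1 [:: v, a & s] =
  flatten [seq [seq Node l v r | l <- andre_trees fuel p.1, r <- andre_trees fuel (a :: p.2)]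
          | p <- splits s].
Proof. by []. Qed.

Lemma sorted_splits_fuel fuel a s p : sorted ltn (a :: s) -> size s < fuel ->
  p \in splits s ->
  [/\ sorted ltn p.1, sorted ltn (a :: p.2), size p.1 <= fuel & size (a :: p.2) <= fuel].
Proof.
case: p => A B as_sorted size_s ps; have [sA sB] := sorted_splits ltn_trans as_sorted ps.
by have /= := size_splits ps; split => //=; lia.
Qed.

Lemma mem_andre_trees fuel s t : sorted ltn s -> size s <= fuel ->
  (t \in andre_trees fuel s) = andre_on s t.
Proof.
elim: fuel s t => [|fuel IH] [|v [|a s]] t vas //=;
  rewrite ?inE ?andre_on_nil ?andre_on1 // ltnS => size_s.
case: t => [|l w r].
  apply/idP/idP => [/flattenP [_ /mapP [p _ ->] /allpairsP [lr [_ _ //]]] |].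
  by case/and3P => /perm_size.
have IHsplit p : p \in splits s ->
    (l \in andre_trees fuel p.1) = andre_on p.1 l /\
    (r \in andre_trees fuel (a :: p.2)) = andre_on (a :: p.2) r.
  by move=> /(sorted_splits_fuel (path_sorted vas) size_s) [sA sB leA leB]; split; apply: IH.
rewrite andre_on_node //; apply/flattenP/andP.
  case=> _ /mapP [p ps ->] /allpairsP [[l' r'] [/= lA rB [El -> Er]]].
  subst l' r'; have [lE rE] := IHsplit p ps; split => //; apply/hasP; exists p => //.
  by rewrite -lE -rE lA rB.
case=> /eqP -> /hasP [p ps]; have [<- <-] := IHsplit p ps => /andP [lA rB].
exists [seq Node l' v r' | l' <- andre_trees fuel p.1, r' <- andre_trees fuel (a :: p.2)].
  by apply/mapP; exists p.
by apply/allpairsP; exists (l, r).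
Qed.

Lemma uniq_andre_trees fuel s : sorted ltn s -> size s <= fuel -> uniq (andre_trees fuel s).
Proof.
elim: fuel s => [|fuel IH] [|v [|a s]] vas //=; rewrite ltnS => size_s.
have split_fuel := sorted_splits_fuel (path_sorted vas) size_s.
apply: flatten_map_uniq.
- exact/uniq_splits/(sorted_uniq ltn_trans ltnn)/path_sorted/(path_sorted vas).
- move=> p /split_fuel [sA sB leA leB].
  by apply: allpairs_uniq; rewrite ?IH // => -[l r] [l' r'] _ _ [-> ->].
move=> p p' t /split_fuel [sA sB leA leB] /split_fuel [sA' sB' leA' leB'].
move=> /allpairsP [[l r] [/= lA rB ->]] /allpairsP [[l' r'] [/= lA' rB' [El Er]]].
subst l' r'; move: lA lA' rB rB'; rewrite !mem_andre_trees //.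
move=> /and3P [pl _ _] /and3P [pl' _ _] /and3P [pr _ _] /and3P [pr' _ _].
have [eqA [eqB]] : p.1 = p'.1 /\ a :: p.2 = a :: p'.2.
  by split; apply: (irr_sorted_eq ltn_trans ltnn) => // z;
    rewrite -?(perm_mem pl) -?(perm_mem pr) ?(perm_mem pl') ?(perm_mem pr').
exact: injective_projections.
Qed.

Lemma perm_andre_trees fuel fuel' s : sorted ltn s ->
  size s <= fuel -> size s <= fuel' -> perm_eq (andre_trees fuel s) (andre_trees fuel' s).
Proof.
move=> ss le_fuel le_fuel'; apply: uniq_perm; rewrite ?uniq_andre_trees // => t.
by rewrite !mem_andre_trees.
Qed.

Fixpoint tmap (f : nat -> nat) (t : btree) : btree :=
  if t is Node l v r then Node (tmap f l) (f v) (tmap f r) else Leaf.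

Lemma andre_trees_map f fuel s :
  andre_trees fuel (map f s) = map (tmap f) (andre_trees fuel s).
Proof.
elim: fuel s => [|fuel IH] [|v [|a s]] //=.
rewrite splits_map map_flatten -!map_comp; congr flatten; apply: eq_map => p /=.
by rewrite IH -map_cons IH allpairs_mapl allpairs_mapr map_allpairs.
Qed.

Lemma labels_tmap f t : labels (tmap f t) = map f (labels t).
Proof. by elim: t => //= l -> v r ->; rewrite map_cat. Qed.

Lemma tmap_eqLeaf f t : (tmap f t == Leaf) = (t == Leaf).
Proof. by case: t. Qed.

Lemma leaves_tmap f t : leaves (tmap f t) = leaves t.
Proof. by elim: t => //= -[|? ? ?] IHl v [|? ? ?] IHr; rewrite ?IHl ?IHr. Qed.

Lemma unary_tmap f t : unary (tmap f t) = unary t.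
Proof. by elim: t => //= l IHl v r IHr; rewrite !tmap_eqLeaf IHl IHr. Qed.

Lemma mem_all_trees L h t : size (labels t) <= h -> all (mem L) (labels t) ->
  t \in all_trees L h.
Proof.
elim: h t => [|h IH] [|l v r] //=; rewrite ?inE // size_cat /= addnS ?ltnS //.
rewrite all_cat /= => size_lr /and3P [lL vL rL].
apply/flattenP; exists [seq Node l v' r' | v' <- L, r' <- all_trees L h].
  by apply/mapP; exists l => //; apply: IH lL; apply: leq_trans size_lr; apply: leq_addr.
apply/allpairsP; exists (v, r); split => //=.
by apply: IH rL; apply: leq_trans size_lr; apply: leq_addl.
Qed.

Definition cross_inv (A B : seq nat) : nat := \sum_(i <- A) \sum_(j <- B) (j < i).

Fixpoint inversions (t : btree) : nat :=
  if t is Node l v r then inversions l + inversions r + cross_inv (labels l) (v :: labels r)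
  else 0.

Lemma cross_inv_perm A A' B B' :
  perm_eq A A' -> perm_eq B B' -> cross_inv A B = cross_inv A' B'.
Proof.
by move=> pA pB; rewrite /cross_inv (perm_big _ pA); apply: eq_bigr => i _; apply: perm_big.
Qed.

Lemma cross_inv_consl v A B : all (ltn v) B -> cross_inv (v :: A) B = cross_inv A B.
Proof.
move=> vB; rewrite /cross_inv big_cons big1_seq ?add0n // => j /andP [_ /(allP vB) vj].
by rewrite ltnNge ltnW.
Qed.

Lemma cross_inv_consr v A B : all (ltn v) A -> cross_inv A (v :: B) = size A + cross_inv A B.
Proof.
move=> vA; rewrite /cross_inv -sum1_size -big_split /=.
by apply: eq_big_seq => i /(allP vA) /= vi; rewrite big_cons vi.
Qed.

Lemma cross_invE (M A B : seq nat) : uniq M -> uniq A -> uniq B ->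
  {subset A <= M} -> {subset B <= M} ->
  cross_inv A B = \sum_(i <- M) \sum_(j <- M) [&& i \in A, j \in B & j < i].
Proof.
move=> uM uA uB AM BM; rewrite /cross_inv -(big_seq_subset _ _ uM uA AM) big_mkcond.
apply: eq_bigr => i _; case: (i \in A); last by rewrite big1.
rewrite -(big_seq_subset _ _ uM uB BM) big_mkcond.
by apply: eq_bigr => j _; case: (j \in B).
Qed.

Lemma inversions_tmap f t : {in labels t &, {mono f : i j / i < j}} ->
  inversions (tmap f t) = inversions t.
Proof.
elim: t => //= l IHl v r IHr mono.
have sub_l : {subset labels l <= labels l ++ v :: labels r}.
  by move=> z zl; rewrite mem_cat zl.
have sub_r : {subset labels r <= labels l ++ v :: labels r}.
  by move=> z zr; rewrite mem_cat inE zr !orbT.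
rewrite (IHl (sub_in2 sub_l mono)) (IHr (sub_in2 sub_r mono)) !labels_tmap -map_cons.
rewrite /cross_inv big_map; congr (_ + _); apply: eq_big_seq => i il.
by rewrite big_map; apply: eq_big_seq => j jr; rewrite mono // mem_cat ?il // jr orbT.
Qed.

Lemma is_inv_node l v r i j : is_inv (Node l v r) i j =
  [|| is_inv l i j, is_inv r i j | [&& i \in labels l, j \in v :: labels r & j < i]].
Proof.
rewrite /is_inv /= has_cat inE.
by case: (j < i); case: (i \in labels l); case: (j == v); case: (j \in labels r);
  case: (has _ (subtrees l)); case: (has _ (subtrees r)).
Qed.

Lemma is_inv_mem t i j : is_inv t i j -> (i \in labels t) && (j \in labels t).
Proof.
elim: t => [|l IHl v r IHr]; first by rewrite /is_inv andbF.
rewrite is_inv_node /= !mem_cat !inE.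
case/or3P => [/IHl/andP [-> ->] | /IHr/andP [-> ->] | /and3P [-> jvr _]] //.
- by rewrite !orbT.
- by rewrite jvr !orbT.
Qed.

Lemma is_inv_node_nat l v r i j : uniq (labels (Node l v r)) ->
  (is_inv (Node l v r) i j : nat) =
  is_inv l i j + is_inv r i j + [&& i \in labels l, j \in v :: labels r & j < i].
Proof.
rewrite /= cat_uniq => /and3P [_ dlr _]; rewrite is_inv_node.
have disj z : z \in labels l -> z \in v :: labels r = false.
  by move=> zl; apply/negbTE; apply: contraTN zl; apply: (hasPn dlr).
case il: (is_inv l i j).
  have /andP [iL jL] := is_inv_mem il; rewrite disj // !andbF.
  case: (boolP (is_inv r i j)) => // /is_inv_mem /andP [iR _].
  by have := disj i iL; rewrite inE iR orbT.
case ir: (is_inv r i j) => /=; last by case: [&& _, _ & _].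
have /andP [iR _] := is_inv_mem ir.
by case: (boolP (i \in labels l)) => // /disj; rewrite inE iR orbT.
Qed.

(* Summing over a fixed superset M of the labels lets the induction keep the range fixed. *)
Lemma sum_is_inv (M : seq nat) t : uniq M -> uniq (labels t) -> {subset labels t <= M} ->
  \sum_(i <- M) \sum_(j <- M) is_inv t i j = inversions t.
Proof.
move=> uM; elim: t => [|l IHl v r IHr] ut tM.
  by rewrite big1 // => i _; rewrite big1 // => j _; rewrite /is_inv andbF.
have := ut; rewrite /= cat_uniq => /and3P [ul _ vr_uniq].
have ur : uniq (labels r) by case/andP: vr_uniq.
have sub_cat (A B : seq nat) : {subset A ++ B <= M} -> {subset A <= M} /\ {subset B <= M}.
  by move=> AB; split=> z zA; apply: AB; rewrite mem_cat zA ?orbT.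
have [lM vrM] := sub_cat _ _ tM; have [_ rM] := sub_cat [:: v] _ vrM.
rewrite /= -IHl // -IHr // (cross_invE uM) // -!big_split /=; apply: eq_bigr => i _.
by rewrite -!big_split; apply: eq_bigr => j _; rewrite is_inv_node_nat.
Qed.

Lemma inv_treeE t : uniq (labels t) -> inv_tree t = inversions t.
Proof.
move=> ut; rewrite /inv_tree size_filter -sum1_count big_mkcond big_allpairs /=.
by rewrite -(sum_is_inv ut ut).
Qed.

Section Weights.

Variables (R : comNzRingType) (q x y : R).
Local Open Scope ring_scope.

Definition weight (t : btree) : R := x ^+ leaves t * y ^+ unary t * q ^+ inversions t.

Definition andre_gf (s : seq nat) : R := \sum_(t <- andre_trees (size s) s) weight t.

Lemma andre_gf_nil : andre_gf [::] = 1.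
Proof. by rewrite /andre_gf big_seq1 /weight !expr0 !mulr1. Qed.

Lemma andre_gf_fuel fuel s : sorted ltn s -> (size s <= fuel)%N ->
  andre_gf s = \sum_(t <- andre_trees fuel s) weight t.
Proof. by move=> ss le_fuel; apply: perm_big; apply: perm_andre_trees. Qed.

Lemma andre_gf_map f s : sorted ltn s -> {in s &, {mono f : i j / (i < j)%N}} ->
  andre_gf (map f s) = andre_gf s.
Proof.
move=> ss mono; rewrite /andre_gf size_map andre_trees_map big_map.
apply: eq_big_seq => t; rewrite mem_andre_trees // => /and3P [pt _ _].
rewrite /weight leaves_tmap unary_tmap inversions_tmap // => i j.
by rewrite !(perm_mem pt); apply: mono.
Qed.

Lemma andre_gf_iota s : sorted ltn s -> andre_gf s = andre_gf (iota 1 (size s)).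
Proof.
move=> ss; have lt_iota : {in iota 0 (size s) &, {mono nth 0%N s : i j / (i < j)%N}}.
  by move=> i j; rewrite !mem_iota; apply: (Order.POrderTheory.lt_sorted_ltn_nth 0%N ss).
rewrite -{1}[s](mkseq_nth 0) /mkseq andre_gf_map ?iota_ltn_sorted //.
by rewrite (iotaDl 1 0) andre_gf_map ?iota_ltn_sorted // => i j _ _; rewrite ltn_add2l.
Qed.

Lemma EII_andre_gf m : (0 < m)%N -> EII q x y m = andre_gf (iota 1 m).
Proof.
case: m => // m _; rewrite /EII /andre_gf size_iota -big_filter.
have sorted_iota := iota_ltn_sorted 1 m.+1.
have size_iota_le : (size (iota 1 m.+1) <= m.+1)%N by rewrite size_iota.
set trees := [seq t <- _ | _].
have trees_perm : perm_eq trees (andre_trees m.+1 (iota 1 m.+1)).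
  apply: uniq_perm; rewrite ?filter_uniq ?undup_uniq ?uniq_andre_trees // => t.
  rewrite mem_filter mem_undup mem_andre_trees //; apply: andb_idr => /and3P [pt _ _].
  apply: mem_all_trees; first by rewrite (perm_size pt) size_iota.
  by apply/allP => z; rewrite (perm_mem pt).
rewrite (perm_big _ trees_perm); apply: eq_big_seq => t.
rewrite mem_andre_trees // => /and3P [pt _ _].
by rewrite /weight inv_treeE // (perm_uniq pt) iota_uniq.
Qed.

Lemma andre_gfE s : sorted ltn s -> s != [::] -> andre_gf s = EII q x y (size s).
Proof. by move=> ss s_nil; rewrite andre_gf_iota // EII_andre_gf // lt0n size_eq0. Qed.

Lemma weight_node l v r : r != Leaf ->
  weight (Node l v r) =
  y ^+ (l == Leaf) * q ^+ cross_inv (labels l) (v :: labels r) * (weight l * weight r).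
Proof.
move=> r_leaf; have leaves_node : leaves (Node l v r) = (leaves l + leaves r)%N.
  by case: r r_leaf; case: l.
by rewrite /weight leaves_node /= (negbTE r_leaf) addbF !exprD; ring.
Qed.

Lemma andre_gf_cons2 v a s : sorted ltn [:: v, a & s] ->
  andre_gf [:: v, a & s] = \sum_(p <- splits s)
    y ^+ (p.1 == [::]) * q ^+ cross_inv p.1 [:: v, a & p.2] *
    (andre_gf p.1 * andre_gf (a :: p.2)).
Proof.
move=> vas; rewrite {1}/andre_gf [size _]/= andre_trees_cons2 big_flatten big_map.
apply: eq_big_seq => p ps; rewrite big_allpairs_dep.
have [sA sB le_A le_B] := sorted_splits_fuel (path_sorted vas) (ltnSn (size s)) ps.
rewrite (andre_gf_fuel sA le_A) (andre_gf_fuel sB le_B) big_distrl big_distrr.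
apply: eq_big_seq => l; rewrite mem_andre_trees // => /and3P [pl _ _].
rewrite !big_distrr; apply: eq_big_seq => r; rewrite mem_andre_trees // => /and3P [pr _ _].
have r_leaf : r != Leaf by rewrite -labels_eq0 -size_eq0 (perm_size pr).
rewrite weight_node // -labels_eq0 -!size_eq0 (perm_size pl).
by rewrite (cross_inv_perm pl (_ : perm_eq _ [:: v, a & p.2])) ?perm_cons // mulrA.
Qed.

Lemma andre_gf_split_term N p : p \in splits (iota 3 N) -> p.1 != [::] ->
  y ^+ (p.1 == [::]) * q ^+ cross_inv p.1 [:: 1, 2 & p.2]%N *
    (andre_gf p.1 * andre_gf (2%N :: p.2)) =
  q ^+ (2 * size p.1) * q ^+ cross_inv p.1 p.2 *
    EII q x y (size p.2).+1 * EII q x y (size p.1).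
Proof.
move=> ps A_nil; have [sA sB] := sorted_splits ltn_trans (iota_ltn_sorted 2 N.+1) ps.
have [A_gt2 _] : all (ltn 2) p.1 /\ all (ltn 2) p.2.
  by apply: all_splits ps; apply/allP => i; rewrite mem_iota => /andP [].
have A_gt1 : all (ltn 1) p.1 by apply: sub_all A_gt2 => i /ltnW.
rewrite (negbTE A_nil) !cross_inv_consr // !andre_gfE //.
by rewrite mul2n -addnn !exprD; ring.
Qed.

End Weights.

Section QSplits.

Variables (R : comNzRingType) (q : R).
Local Open Scope ring_scope.

Definition qsplits (s : seq nat) (k : nat) : R :=
  \sum_(p <- splits s | size p.2 == k) q ^+ cross_inv p.1 p.2.

Lemma qsplits_cons v s k : sorted ltn (v :: s) ->
  qsplits (v :: s) k =
  qsplits s k + (if k is k'.+1 then q ^+ (size s - k') * qsplits s k' else 0).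
Proof.
move=> vs; have v_s : all (ltn v) s := order_path_min ltn_trans vs.
rewrite /qsplits /= big_cat !big_map /=; congr (_ + _).
  rewrite big_seq_cond [RHS]big_seq_cond; apply: eq_bigr => p /andP [ps _].
  by have [_ vB] := all_splits v_s ps; rewrite cross_inv_consl.
case: k => [|k]; first by rewrite big_pred0.
rewrite mulr_sumr big_seq_cond [RHS]big_seq_cond.
apply: eq_bigr => p /andP [ps /eqP [size_B]].
have [vA _] := all_splits v_s ps; have size_AB := size_splits ps.
by rewrite cross_inv_consr // exprD -size_AB size_B addnK.
Qed.

Lemma qsplits_gt s k : (size s < k)%N -> qsplits s k = 0.
Proof.
move=> lt_s_k; rewrite /qsplits big_seq_cond big_pred0 // => p.
apply/negbTE/andP => -[/size_splits size_AB /eqP size_B].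
by move: lt_s_k; rewrite -size_AB size_B ltnNge leq_addl.
Qed.

Lemma qpochS n : qpoch q n.+1 = qpoch q n * (1 - q ^+ n.+1).
Proof. by rewrite /qpoch big_nat_recr. Qed.

Lemma qpoch0 : qpoch q 0 = 1.
Proof. by rewrite /qpoch big_geq. Qed.

Lemma qsplits_qpoch s k j : sorted ltn s -> size s = (k + j)%N ->
  qsplits s k * qpoch q k * qpoch q j = qpoch q (k + j).
Proof.
elim: s k j => [|v s IH] k j ss.
  case: k j => [|?] [|?] // _.
  by rewrite /qsplits /cross_inv !big_cons !big_nil /= addr0 expr0 qpoch0 !mulr1.
have {}IH := IH _ _ (path_sorted ss); rewrite qsplits_cons //= => size_s.
case: k j size_s => [|k] [|j] //= [size_s]; rewrite ?addn0 in size_s *.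
- by rewrite add0n qpochS -[in RHS](IH 0%N j) // qpoch0; ring.
- have := IH k 0%N; rewrite addn0 => IHk.
  by rewrite qsplits_gt ?size_s // subnn qpochS -[in RHS]IHk // qpoch0; ring.
transitivity (qsplits s k.+1 * qpoch q k.+1 * qpoch q j * (1 - q ^+ j.+1) +
              q ^+ j.+1 * (qsplits s k * qpoch q k * qpoch q j.+1) * (1 - q ^+ k.+1)).
  by rewrite size_s addKn !qpochS; ring.
rewrite (IH k.+1 j) ?(IH k j.+1) ?size_s ?addSn ?addnS // [in RHS]qpochS.
have -> : (k + j).+2 = (j.+1 + k.+1)%N by rewrite addSn addnS addnC.
by rewrite exprD; ring.
Qed.

End QSplits.

Local Open Scope ring_scope.

Lemma qpoch_neq0 (R : fieldType) (q : R) n :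
  (forall i, (0 < i <= n)%N -> q ^+ i != 1) -> qpoch q n != 0.
Proof.
move=> q_pow; rewrite /qpoch prodf_seq_neq0; apply/allP => i.
by rewrite mem_index_iota => /andP [i_gt0 i_le]; rewrite subr_eq0 eq_sym q_pow ?i_gt0.
Qed.

Lemma qbinom_qsplits (R : fieldType) (q : R) s n k : sorted ltn s -> size s = n ->
  (k <= n)%N -> (forall i, (0 < i <= n)%N -> q ^+ i != 1) ->
  qbinom q n k = qsplits q s k.
Proof.
move=> ss size_s le_kn q_pow; have qpoch_nz j : (j <= n)%N -> qpoch q j != 0.
  move=> le_jn; apply: qpoch_neq0 => i /andP [i_gt0 le_ij].
  by rewrite q_pow ?i_gt0 ?(leq_trans le_ij).
rewrite /qbinom -{1}(subnKC le_kn) -(qsplits_qpoch q ss) ?subnKC //.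
by rewrite -[_ * _ * qpoch q (n - k)]mulrA mulfK // mulf_neq0 ?qpoch_nz ?leq_subr.
Qed.

Lemma EII_splits (R : comNzRingType) (q x y : R) N :
  EII q x y N.+2 = y * EII q x y N.+1 +
  \sum_(k < N) q ^+ (2 * (N - k)) * qsplits q (iota 3 N) k * EII q x y k.+1 * EII q x y (N - k).
Proof.
set S := iota 3 N.
rewrite EII_andre_gf // (_ : iota 1 N.+2 = [:: 1, 2 & S]%N) //.
rewrite andre_gf_cons2 ?(iota_ltn_sorted 1 N.+2) //.
rewrite (bigID (fun p => p.1 == [::])) -big_filter filter_splits_nil big_seq1 [LHS]/=.
rewrite [cross_inv [::] _]big_nil andre_gf_nil andre_gfE ?(iota_ltn_sorted 2 N.+1) //.
rewrite (_ : size (2 :: S) = N.+1)%N; last by rewrite /= size_iota.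
rewrite expr0 expr1 mulr1 mul1r; congr (_ + _).
have nil_size : {in splits S, forall p, (p.1 != [::]) = (size p.2 < N)%N}.
  move=> [A B] /size_splits; rewrite /S size_iota /= => <-.
  by rewrite -size_eq0 -lt0n -{1}[size B]add0n ltn_add2r.
rewrite (big_partition_ord _ _ nil_size); apply: eq_bigr => k _.
rewrite /qsplits mulr_sumr !mulr_suml big_seq_cond [RHS]big_seq_cond.
apply: eq_bigr => p /andP [ps /eqP size_B].
have size_A : size p.1 = (N - k)%N.
  have := size_splits ps; rewrite /S size_iota size_B => size_AB.
  by rewrite -(addnK k (size p.1)) size_AB.
by rewrite (andre_gf_split_term _ _ _ ps) ?nil_size ?size_B // size_A.
Qed.

Unset Implicit Arguments.

Theorem theorem6p15 (R : fieldType) (q x y : R) (n : nat) :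
  (1 <= n)%N ->
  (forall i : nat, (0 < i < n)%N -> q ^+ i != 1) ->
  EII q x y n.+1 =
    y * EII q x y n +
    \sum_(k < n.-1)
      q ^+ (2 * (n - k - 1)) * qbinom q n.-1 k
        * EII q x y k.+1 * EII q x y (n - k - 1).
Proof.
case: n => // N _ q_pow; rewrite EII_splits; congr (_ + _); apply: eq_bigr => k _.
rewrite (qbinom_qsplits (iota_ltn_sorted 3 N) (size_iota 3 N) (ltnW (ltn_ord k))).
  by rewrite subnAC subn1.
by move=> i /andP [i_gt0 le_iN]; rewrite q_pow ?i_gt0.
Qed.
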